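(* Let $\phi$ be the real root of $x^3=x^2+x+1$. For $n\ge 3$, if $\langle a_i\rangle_{i=1}^n$ is a sequence of integers, not identically zero, with $a_i=a_{i-1}+a_{i-2}+a_{i-3}$ for $4\le i\le n$ and $a_n=0$, then either $|a_1|>0.01\phi^{n/2}$ or $|a_2|>0.01\phi^{(n-1)/2}$ (or both). *)

From Stdlib Require Import Reals ZArith Lia Lra.
Open Scope R_scope.

(* The tribonacci constant is characterized as a real number phi with
   phi^3 = phi^2 + phi + 1 (this cubic has exactly one real root). *)
Definition is_trib_root (phi : R) : Prop := phi ^ 3 = phi ^ 2 + phi + 1.

From Stdlib Require Import Reals ZArith Lra Lia.
Open Scope R_scope.

(* The tribonacci shift (v0, v1, v2) |-> (v1, v2, v0 + v1 + v2) has the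
   eigenvalue phi and a pair of complex eigenvalues of squared modulus 1/phi.
   Along a solution, the phi-coordinate [trib_lin] of the window
   (a_k, a_(k+1), a_(k+2)) is multiplied by phi at each step, and the squared
   modulus [trib_quad] of its complex coordinate by 1/phi.  The last window
   (a_(n-2), a_(n-1), 0) is a nonzero integer vector, so its [trib_quad] is at
   least 4 and dominates its [trib_lin]^2.  Going back n-3 steps, the first
   window has a huge [trib_quad] but a tiny [trib_lin]; since a_3 is determined
   by [trib_lin], a_1 and a_2, this forces a_1^2 + a_2^2 >= phi^(n-3) / 55.
   For n <= 4 the bounds force a_1 = a_2 = 0 instead, and then the sequence
   keeps the sign of a_3 and cannot vanish at n. *)

Lemma IZR_sq_ge1 (z : Z) : z <> 0%Z -> 1 <= IZR z ^ 2.
Proof.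
  intros hz. destruct (Z_lt_le_dec 0 z) as [h | h].
  - assert (1 <= IZR z) by (apply IZR_le; lia). nra.
  - assert (IZR z <= -1) by (apply IZR_le; lia). nra.
Qed.

Lemma IZR_sq_add_ge1 (x y : Z) : x <> 0%Z \/ y <> 0%Z -> 1 <= IZR x ^ 2 + IZR y ^ 2.
Proof.
  pose proof (pow2_ge_0 (IZR x)). pose proof (pow2_ge_0 (IZR y)).
  intros [hx | hy]; [pose proof (IZR_sq_ge1 x hx) | pose proof (IZR_sq_ge1 y hy)]; lra.
Qed.

Lemma sqr_le_Rpower_half (x c b : R) (m : nat) :
  0 < b -> Rabs x <= c * Rpower b (INR m / 2) -> x ^ 2 <= c ^ 2 * b ^ m.
Proof.
  intros hb hx.
  rewrite <- (Rpower_pow m b hb).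
  replace (INR m) with (INR m / 2 + INR m / 2) by field.
  rewrite Rpower_plus.
  replace (c ^ 2 * _) with ((c * Rpower b (INR m / 2)) ^ 2) by ring.
  now apply pow_maj_Rabs.
Qed.

Lemma sqr_scale_le (k x c : R) : k ^ 2 <= c -> (k * x) ^ 2 <= c * x ^ 2.
Proof.
  intros hk. rewrite Rpow_mult_distr.
  apply Rmult_le_compat_r; [apply pow2_ge_0 | exact hk].
Qed.

Lemma sqr_add_le (x y : R) : (x + y) ^ 2 <= 2 * x ^ 2 + 2 * y ^ 2.
Proof. assert (0 <= (x - y) ^ 2) by apply pow2_ge_0. nra. Qed.

Definition trib_upto (n : nat) (a : nat -> Z) : Prop :=
  forall i, (4 <= i <= n)%nat -> a i = (a (i - 1)%nat + a (i - 2)%nat + a (i - 3)%nat)%Z.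

Section TribonacciIntegers.

Variables (n : nat) (a : nat -> Z).
Hypothesis hrec : trib_upto n a.

Lemma trib_upto_opp : trib_upto n (fun i => (- a i)%Z).
Proof. intros i hi. specialize (hrec i hi). lia. Qed.

Lemma trib_upto_pos :
  (0 <= a 1%nat)%Z -> (0 <= a 2%nat)%Z -> (0 < a 3%nat)%Z ->
  forall i, (3 <= i <= n)%nat -> (0 < a i)%Z.
Proof.
  intros h1 h2 h3.
  assert (H : forall i, (1 <= i <= n)%nat -> (0 <= a i)%Z /\ ((3 <= i)%nat -> (0 < a i)%Z)).
  { intros i; induction i as [i IH] using (well_founded_induction lt_wf); intros hi.
    destruct (Nat.le_gt_cases i 3) as [hle | hgt].
    - assert (i = 1 \/ i = 2 \/ i = 3)%nat as [-> | [-> | ->]] by lia; lia.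
    - rewrite (hrec i) by lia.
      destruct (IH (i - 1)%nat) as [_ hpos1]; [lia | lia |].
      destruct (IH (i - 2)%nat) as [hnn2 _]; [lia | lia |].
      destruct (IH (i - 3)%nat) as [hnn3 _]; [lia | lia |].
      specialize (hpos1 ltac:(lia)). lia. }
  intros i hi. apply H; lia.
Qed.

Lemma trib_eq0_of_first3 :
  a 1%nat = 0%Z -> a 2%nat = 0%Z -> a 3%nat = 0%Z -> forall i, (1 <= i <= n)%nat -> a i = 0%Z.
Proof.
  intros h1 h2 h3 i; induction i as [i IH] using (well_founded_induction lt_wf); intros hi.
  destruct (Nat.le_gt_cases i 3) as [hle | hgt].
  - assert (i = 1 \/ i = 2 \/ i = 3)%nat as [-> | [-> | ->]] by lia; assumption.
  - rewrite (hrec i), (IH (i - 1)%nat), (IH (i - 2)%nat), (IH (i - 3)%nat); lia.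
Qed.

Lemma trib_eq0_of_last3 :
  a n = 0%Z -> a (n - 1)%nat = 0%Z -> a (n - 2)%nat = 0%Z ->
  forall i, (1 <= i <= n)%nat -> a i = 0%Z.
Proof.
  intros h0 h1 h2 i.
  remember (n - i)%nat as d eqn:hd. revert i hd.
  induction d as [d IH] using (well_founded_induction lt_wf); intros i hd hi.
  destruct (Nat.le_gt_cases d 2) as [hle | hgt].
  - assert (i = n \/ i = n - 1 \/ i = n - 2)%nat as [-> | [-> | ->]] by lia; assumption.
  - assert (E := hrec (i + 3)%nat ltac:(lia)).
    replace (i + 3 - 1)%nat with (i + 2)%nat in E by lia.
    replace (i + 3 - 2)%nat with (i + 1)%nat in E by lia.
    replace (i + 3 - 3)%nat with i in E by lia.
    rewrite (IH (d - 3)%nat), (IH (d - 2)%nat), (IH (d - 1)%nat) in E; lia.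
Qed.

End TribonacciIntegers.

Lemma trib_eq0_of_first2_last (n : nat) (a : nat -> Z) :
  trib_upto n a -> (3 <= n)%nat -> a n = 0%Z -> a 1%nat = 0%Z -> a 2%nat = 0%Z ->
  forall i, (1 <= i <= n)%nat -> a i = 0%Z.
Proof.
  intros hrec hn h0 h1 h2.
  destruct (Z.lt_trichotomy (a 3%nat) 0) as [h3 | [h3 | h3]].
  - pose proof (trib_upto_pos n (fun i => (- a i)%Z) (trib_upto_opp n a hrec)) as hpos.
    specialize (hpos ltac:(lia) ltac:(lia) ltac:(lia) n ltac:(lia)). lia.
  - exact (trib_eq0_of_first3 n a hrec h1 h2 h3).
  - pose proof (trib_upto_pos n a hrec ltac:(lia) ltac:(lia) h3 n ltac:(lia)). lia.
Qed.

Lemma trib_window_scale (F : R -> R -> R -> R) (c : R) (n : nat) (x : nat -> R) :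
  (forall v0 v1 v2, F v1 v2 (v0 + v1 + v2) = c * F v0 v1 v2) ->
  (forall i, (4 <= i <= n)%nat -> x i = x (i - 1)%nat + x (i - 2)%nat + x (i - 3)%nat) ->
  forall k, (k + 3 <= n)%nat ->
  F (x (k + 1)%nat) (x (k + 2)%nat) (x (k + 3)%nat) = c ^ k * F (x 1%nat) (x 2%nat) (x 3%nat).
Proof.
  intros hF hx k; induction k as [| k IH]; intros hk.
  - simpl. ring.
  - replace (S k + 1)%nat with (k + 2)%nat by lia.
    replace (S k + 2)%nat with (k + 3)%nat by lia.
    replace (S k + 3)%nat with (k + 4)%nat by lia.
    rewrite (hx (k + 4)%nat) by lia.
    replace (k + 4 - 1)%nat with (k + 3)%nat by lia.
    replace (k + 4 - 2)%nat with (k + 2)%nat by lia.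
    replace (k + 4 - 3)%nat with (k + 1)%nat by lia.
    rewrite (Rplus_comm (x (k + 3)%nat)), Rplus_comm, <- Rplus_assoc.
    rewrite hF, IH by lia. simpl. ring.
Qed.

Section TribonacciForms.

Variable phi : R.
Hypothesis hphi : is_trib_root phi.

Lemma trib_root_bounds : 7 / 4 < phi < 2.
Proof.
  unfold is_trib_root in hphi.
  assert (0 < phi ^ 2 + 3 / 4 * phi + 5 / 16) by nra.
  assert (0 < phi ^ 2 + phi + 1) by nra.
  assert ((phi - 7 / 4) * (phi ^ 2 + 3 / 4 * phi + 5 / 16) = 29 / 64) by nra.
  assert ((phi - 2) * (phi ^ 2 + phi + 1) = - 1) by nra.
  split; nra.
Qed.

(* Let lambda be a complex root of x^2 + (phi - 1) x + (phi^2 - phi - 1), the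
   cofactor of x - phi in x^3 - x^2 - x - 1.  [trib_lin] is the left eigenvector
   of the shift for phi, and [trib_quad] is (2 Re L)^2 + (2 Im L)^2 = 4 |L|^2
   for the left eigenvector L v = v2 + (lambda - 1) v1 + v0 / lambda for
   lambda; here 4 (Im lambda)^2 = 3 phi^2 - 2 phi - 5 and Im (1 / lambda) =
   - phi Im lambda. *)
Definition trib_lin (v0 v1 v2 : R) : R := v2 + (phi - 1) * v1 + (phi ^ 2 - phi - 1) * v0.

Definition trib_quad (v0 v1 v2 : R) : R :=
  (2 * v2 - (1 + phi) * v1 + phi * (1 - phi) * v0) ^ 2
  + (3 * phi ^ 2 - 2 * phi - 5) * (v1 - phi * v0) ^ 2.

Lemma trib_lin_step v0 v1 v2 : trib_lin v1 v2 (v0 + v1 + v2) = phi * trib_lin v0 v1 v2.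
Proof.
  unfold trib_lin.
  replace (phi * _) with (phi ^ 3 * v0 + (phi ^ 2 - phi) * v1 + phi * v2 - (phi ^ 2 + phi) * v0)
    by ring.
  rewrite hphi. ring.
Qed.

Lemma trib_quad_step v0 v1 v2 : trib_quad v1 v2 (v0 + v1 + v2) = / phi * trib_quad v0 v1 v2.
Proof.
  destruct trib_root_bounds as [phi_lo _].
  apply (Rmult_eq_reg_l phi); [| lra].
  rewrite <- Rmult_assoc, Rinv_r, Rmult_1_l by lra.
  assert (E : phi * trib_quad v1 v2 (v0 + v1 + v2) - trib_quad v0 v1 v2
            = (phi ^ 3 - phi ^ 2 - phi - 1)
              * (4 * v2 ^ 2 - 4 * v1 * v2 - 4 * v1 ^ 2 - 4 * phi * v1 * v2
                 - 4 * phi * v0 ^ 2 + 4 * phi ^ 2 * v1 ^ 2)).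
  { unfold trib_quad. ring. }
  rewrite hphi in E. lra.
Qed.

Lemma trib_quad_lower v0 v1 : 4 * (v0 ^ 2 + v1 ^ 2) <= trib_quad v0 v1 0.
Proof.
  destruct trib_root_bounds as [phi_lo phi_hi].
  assert (E : trib_quad v0 v1 0
            = 4 * (phi * v0 ^ 2 + (phi - 1) * v0 * v1 + (phi ^ 2 - 1) * v1 ^ 2)
              + (phi ^ 3 - phi ^ 2 - phi - 1) * (4 * phi * v0 ^ 2 - 4 * v0 * v1)).
  { unfold trib_quad. ring. }
  rewrite E, hphi.
  assert (0 <= v0 ^ 2 + v0 * v1 + v1 ^ 2) by nra.
  assert (0 <= (phi - 1) * (v0 ^ 2 + v0 * v1 + v1 ^ 2)) by (apply Rmult_le_pos; lra).
  assert (0 <= (phi ^ 2 - phi - 1) * v1 ^ 2) by (apply Rmult_le_pos; nra).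
  nra.
Qed.

Lemma trib_lin_sq_le v0 v1 : trib_lin v0 v1 0 ^ 2 <= 2 * (v0 ^ 2 + v1 ^ 2).
Proof.
  destruct trib_root_bounds as [phi_lo phi_hi].
  unfold trib_lin. rewrite Rplus_0_l.
  pose proof (sqr_add_le ((phi - 1) * v1) ((phi ^ 2 - phi - 1) * v0)).
  assert (((phi - 1) * v1) ^ 2 <= 1 * v1 ^ 2) by (apply sqr_scale_le; nra).
  assert (0 <= phi ^ 2 - phi - 1 <= 1) by (split; nra).
  assert (((phi ^ 2 - phi - 1) * v0) ^ 2 <= 1 * v0 ^ 2) by (apply sqr_scale_le; nra).
  lra.
Qed.

Lemma trib_quad_upper v0 v1 v2 :
  trib_quad v0 v1 v2 <= 8 * trib_lin v0 v1 v2 ^ 2 + 110 * (v0 ^ 2 + v1 ^ 2).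
Proof.
  destruct trib_root_bounds as [phi_lo phi_hi].
  set (c := - 3 * phi ^ 2 + 3 * phi + 2).
  set (r := (1 - 3 * phi) * v1 + c * v0).
  set (t := 3 * phi ^ 2 - 2 * phi - 5).
  assert (E : trib_quad v0 v1 v2 = (2 * trib_lin v0 v1 v2 + r) ^ 2 + t * (v1 + - phi * v0) ^ 2).
  { unfold trib_quad, trib_lin, r, c, t. ring. }
  assert (hr : r ^ 2 <= 50 * v1 ^ 2 + 32 * v0 ^ 2).
  { pose proof (sqr_add_le ((1 - 3 * phi) * v1) (c * v0)) as hsum. fold r in hsum.
    assert (- 4 <= c <= 4) by (unfold c; split; nra).
    assert (((1 - 3 * phi) * v1) ^ 2 <= 25 * v1 ^ 2) by (apply sqr_scale_le; nra).
    assert ((c * v0) ^ 2 <= 16 * v0 ^ 2) by (apply sqr_scale_le; nra).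
    lra. }
  assert (ht : t * (v1 + - phi * v0) ^ 2 <= 6 * v1 ^ 2 + 24 * v0 ^ 2).
  { pose proof (sqr_add_le v1 (- phi * v0)).
    assert ((- phi * v0) ^ 2 <= 4 * v0 ^ 2) by (apply sqr_scale_le; nra).
    assert (t * (v1 + - phi * v0) ^ 2 <= 3 * (v1 + - phi * v0) ^ 2).
    { apply Rmult_le_compat_r; [apply pow2_ge_0 | unfold t; nra]. }
    lra. }
  pose proof (sqr_add_le (2 * trib_lin v0 v1 v2) r).
  replace ((2 * trib_lin v0 v1 v2) ^ 2) with (4 * trib_lin v0 v1 v2 ^ 2) in * by ring.
  pose proof (pow2_ge_0 v0). pose proof (pow2_ge_0 v1).
  lra.
Qed.

Lemma trib_head_bound (N v0 v1 v2 w0 w1 : R) :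
  2 <= N -> 1 <= w0 ^ 2 + w1 ^ 2 ->
  trib_quad w0 w1 0 * N = trib_quad v0 v1 v2 ->
  trib_lin w0 w1 0 = N * trib_lin v0 v1 v2 ->
  N <= 55 * (v0 ^ 2 + v1 ^ 2).
Proof.
  intros hN hw hQ hP.
  pose proof (trib_quad_lower w0 w1) as hQw.
  pose proof (trib_lin_sq_le w0 w1) as hPw.
  pose proof (trib_quad_upper v0 v1 v2) as hQv.
  rewrite hP in hPw. rewrite <- hQ in hQv.
  set (Qw := trib_quad w0 w1 0) in *. set (P := trib_lin v0 v1 v2) in *.
  assert (hP2 : 8 * P ^ 2 <= Qw).
  { replace ((N * P) ^ 2) with (N ^ 2 * P ^ 2) in hPw by ring.
    assert (hN2 : 4 <= N ^ 2) by nra.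
    assert (4 * Qw <= N ^ 2 * Qw) by (apply Rmult_le_compat_r; lra).
    apply (Rmult_le_reg_l (N ^ 2)); lra. }
  nra.
Qed.

Lemma trib_head_lower (n : nat) (a : nat -> Z) :
  trib_upto n a -> (5 <= n)%nat -> a n = 0%Z ->
  (exists i, (1 <= i <= n)%nat /\ a i <> 0%Z) ->
  phi ^ (n - 3) <= 55 * (IZR (a 1%nat) ^ 2 + IZR (a 2%nat) ^ 2).
Proof.
  intros hrec hn hn0 [i [hi hai]].
  destruct trib_root_bounds as [phi_lo phi_hi].
  set (x j := IZR (a j)).
  assert (hx : forall j, (4 <= j <= n)%nat -> x j = x (j - 1)%nat + x (j - 2)%nat + x (j - 3)%nat).
  { intros j hj. unfold x. rewrite (hrec j hj), !plus_IZR. reflexivity. }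
  pose proof (trib_window_scale trib_lin phi n x trib_lin_step hx (n - 3) ltac:(lia)) as hP.
  pose proof (trib_window_scale trib_quad (/ phi) n x trib_quad_step hx (n - 3) ltac:(lia)) as hQ.
  replace (n - 3 + 1)%nat with (n - 2)%nat in hP, hQ by lia.
  replace (n - 3 + 2)%nat with (n - 1)%nat in hP, hQ by lia.
  replace (n - 3 + 3)%nat with n in hP, hQ by lia.
  unfold x in hP, hQ. rewrite hn0 in hP, hQ.
  apply (trib_head_bound _ _ _ (IZR (a 3%nat)) (IZR (a (n - 2)%nat)) (IZR (a (n - 1)%nat))).
  - pose proof (Rle_pow phi 2 (n - 3) ltac:(lra) ltac:(lia)). nra.
  - apply IZR_sq_add_ge1.
    destruct (Z.eq_dec (a (n - 2)%nat) 0) as [e2 | ne2]; [| now left].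
    destruct (Z.eq_dec (a (n - 1)%nat) 0) as [e1 | ne1]; [| now right].
    exfalso. exact (hai (trib_eq0_of_last3 n a hrec hn0 e1 e2 i hi)).
  - rewrite hQ, pow_inv. field. apply pow_nonzero. lra.
  - exact hP.
Qed.

Lemma trib_small_int_eq0 (z : Z) (m : nat) :
  (m <= 4)%nat -> IZR z ^ 2 <= (1 / 100) ^ 2 * phi ^ m -> z = 0%Z.
Proof.
  intros hm hz.
  destruct trib_root_bounds as [phi_lo phi_hi].
  destruct (Z.eq_dec z 0) as [e | ne]; [exact e |].
  pose proof (IZR_sq_ge1 z ne).
  pose proof (Rle_pow phi m 4 ltac:(lra) hm). pose proof (pow_incr phi 2 4 ltac:(lra)).
  simpl (2 ^ 4) in *. lra.
Qed.

Lemma trib_pow_add_le (k m : nat) : phi ^ (k + m) <= 2 ^ k * phi ^ m.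
Proof.
  destruct trib_root_bounds as [phi_lo phi_hi].
  rewrite pow_add. apply Rmult_le_compat_r.
  - apply pow_le. lra.
  - apply pow_incr. lra.
Qed.

End TribonacciForms.

Theorem corollary2 (phi : R) (hphi : is_trib_root phi)
  (n : nat) (hn : (3 <= n)%nat) (a : nat -> Z)
  (hnz : exists i, (1 <= i <= n)%nat /\ a i <> 0%Z)
  (hrec : forall i, (4 <= i <= n)%nat -> a i = (a (i-1)%nat + a (i-2)%nat + a (i-3)%nat)%Z)
  (hn0 : a n = 0%Z) :
  Rabs (IZR (a 1%nat)) > (1/100) * Rpower phi (INR n / 2) \/
  Rabs (IZR (a 2%nat)) > (1/100) * Rpower phi ((INR n - 1) / 2).
Proof.
  destruct (Rlt_le_dec ((1/100) * Rpower phi (INR n / 2)) (Rabs (IZR (a 1%nat))))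
    as [h | h1]; [now left |].
  destruct (Rlt_le_dec ((1/100) * Rpower phi ((INR n - 1) / 2)) (Rabs (IZR (a 2%nat))))
    as [h | h2]; [now right |].
  exfalso.
  destruct (trib_root_bounds phi hphi) as [phi_lo phi_hi].
  replace (INR n - 1) with (INR (n - 1)) in h2 by (rewrite minus_INR by lia; reflexivity).
  apply sqr_le_Rpower_half in h1, h2; [| lra | lra].
  destruct (le_lt_dec n 4) as [small | big].
  - destruct hnz as [i [hi hai]]. apply hai.
    apply (trib_eq0_of_first2_last n a hrec hn hn0); [| | lia].
    + exact (trib_small_int_eq0 phi hphi _ n small h1).
    + exact (trib_small_int_eq0 phi hphi _ (n - 1) ltac:(lia) h2).
  - pose proof (trib_head_lower phi hphi n a hrec ltac:(lia) hn0 hnz) as hN.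
    pose proof (trib_pow_add_le phi hphi 3 (n - 3)) as hpow3.
    pose proof (trib_pow_add_le phi hphi 2 (n - 3)) as hpow2.
    replace (3 + (n - 3))%nat with n in hpow3 by lia.
    replace (2 + (n - 3))%nat with (n - 1)%nat in hpow2 by lia.
    pose proof (pow_lt phi (n - 3) ltac:(lra)).
    simpl (2 ^ 3) in hpow3. simpl (2 ^ 2) in hpow2. lra.
Qed.
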